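(* Let $G$ be a graph (simple, connected, locally finite, with edges of arbitrary positive lengths), $\mathcal{L}(G)$ its line graph and $h:\mathcal{L}(G)\to G$ the map defined below. Then for every $x,y\in\mathcal{L}(G)$, $$d_{\mathcal{L}(G)}(x,y)\le d_G(h(x),h(y))+2\,l_{max},\qquad\text{where } l_{max}:=\sup_{e\in E(G)}L(e).$$
   Context: Graphs are regarded as geodesic metric spaces: each edge $e$ of length $L(e)$ is identified with the real interval $[0,L(e)]$, and $d_G$ is the induced shortest-path distance. The line graph $\mathcal{L}(G)$ has a vertex $V_e$ for each edge $e$ of $G$, and an edge $[V_{e_i},V_{e_j}]$ whenever $e_i\neq e_j$ and $e_i\cap e_j\neq\varnothing$, of length $(L(e_i)+L(e_j))/2$. $Pm(e)$ denotes the midpoint of $e\in E(G)$; $Pm_{\mathcal{L}}([V_{e_i},V_{e_j}])$ denotes the point of the edge $[V_{e_i},V_{e_j}]$ at distance $L(e_i)/2$ from $V_{e_i}$. The map $h$ is defined by $h(V_e)=Pm(e)$, $h(Pm_{\mathcal{L}}([V_{e_i},V_{e_j}]))=$ the vertex $e_i\cap e_j$ of $G$, and for $x_0$ in the interior of the segment from $V_e$ to $Pm_{\mathcal{L}}([V_e,V_{e_0}])$, $h(x_0)$ is the point of the half-edge of $e$ from $Pm(e)$ to the vertex $e\cap e_0$ at distance $d(x_0,V_e)$ from $Pm(e)$. *)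

From HB Require Import structures.
From mathcomp Require Import all_boot all_order all_algebra.
From mathcomp Require Import all_classical all_reals all_analysis.
From Stdlib Require Import Relations.

Set Implicit Arguments.
Unset Strict Implicit.
Unset Printing Implicit Defensive.

Import Order.TTheory GRing.Theory Num.Theory.
Local Open Scope classical_set_scope.
Local Open Scope ring_scope.

(* Generic metric graph: vertices, edges, each edge e is identified    *)
(* with the real interval [0, len e], 0 <-> src e, len e <-> tgt e.     *)
Record mgraph (R : realType) := MGraph {
  vtx : Type;
  edg : Type;
  src : edg -> vtx;
  tgt : edg -> vtx;
  len : edg -> R }.

(* A point of the metric graph: a vertex, or an interior gpoint (e, t),  *)
(* 0 < t < len e, at distance t from src e along e.                    *)
Definition gpoint (R : realType) (g : mgraph R) : Type :=
  (vtx g + (edg g * R))%type.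

Definition valid_point (R : realType) (g : mgraph R) (p : gpoint g) : Prop :=
  match p with
  | inl _ => True
  | inr (e, t) => 0 < t < len e
  end.

Definition on_edge (R : realType) (g : mgraph R) (p : gpoint g) (e : edg g)
    (s : R) : Prop :=
  0 <= s <= len e /\
  ((s = 0 /\ p = inl (src e)) \/ (s = len e /\ p = inl (tgt e)) \/
   (0 < s < len e /\ p = inr (e, s))).

Definition step (R : realType) (g : mgraph R) (p q : gpoint g) (l : R) : Prop :=
  exists e s s', on_edge p e s /\ on_edge q e s' /\ l = `|s - s'|.

Inductive chain (R : realType) (g : mgraph R) : gpoint g -> gpoint g -> R -> Prop :=
  | chain_nil x : chain x x 0
  | chain_cons x z y a b : step x z a -> chain z y b -> chain x y (a + b).

Definition gdist (R : realType) (g : mgraph R) (x y : gpoint g) : \bar R :=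
  ereal_inf (EFin @` [set l | chain x y l]).

Definition adjacent (V E : Type) (src tgt : E -> V) (a b : V) : Prop :=
  exists e, (src e = a /\ tgt e = b) \/ (src e = b /\ tgt e = a).

Definition simple_graph (V E : Type) (src tgt : E -> V) : Prop :=
  (forall e, src e <> tgt e) /\
  (forall e f, (src e = src f /\ tgt e = tgt f) \/ (src e = tgt f /\ tgt e = src f)
     -> e = f).

Definition connected_graph (V E : Type) (src tgt : E -> V) : Prop :=
  forall u v, clos_refl_trans V (adjacent src tgt) u v.

Definition locally_finite (V E : Type) (src tgt : E -> V) : Prop :=
  forall v, finite_set [set e | src e = v \/ tgt e = v].

Definition share (V E : Type) (src tgt : E -> V) (e f : E) : Prop :=
  src e = src f \/ src e = tgt f \/ tgt e = src f \/ tgt e = tgt f.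

Definition ledge (V E : Type) (src tgt : E -> V) : Type :=
  {s : set E | exists p : E * E,
     p.1 <> p.2 /\ share src tgt p.1 p.2 /\ s = [set p.1; p.2]}.

(* An (arbitrary, chosen) orientation [V_{e_i}, V_{e_j}] of a line-graph edge. *)
Definition ledge_pair (V E : Type) (src tgt : E -> V) (le : ledge src tgt) : E * E :=
  proj1_sig (cid (proj2_sig le)).

Definition line_graph (R : realType) (V E : Type) (src tgt : E -> V) (L : E -> R)
  : mgraph R :=
  @MGraph R E (ledge src tgt)
    (fun le => (ledge_pair le).1)
    (fun le => (ledge_pair le).2)
    (fun le => (L (ledge_pair le).1 + L (ledge_pair le).2) / 2).

Definition base_graph (R : realType) (V E : Type) (src tgt : E -> V) (L : E -> R)
  : mgraph R := @MGraph R V E src tgt L.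

(* The vertex e ∩ f of G (for distinct edges sharing an endpoint). *)
Definition common (V E : Type) (src tgt : E -> V) (e f : E) : V :=
  if pselect (src e = src f \/ src e = tgt f) then src e else tgt e.

(* Point of the half-edge of e from Pm(e) to the endpoint v, at distance d *)
(* from the midpoint Pm(e) (0 <= d < L e / 2).                            *)
Definition toward (R : realType) (V E : Type) (src tgt : E -> V) (L : E -> R)
  (e : E) (v : V) (d : R) : gpoint (base_graph src tgt L) :=
  inr (e, if pselect (v = src e) then L e / 2 - d else L e / 2 + d).

Definition hmap (R : realType) (V E : Type) (src tgt : E -> V) (L : E -> R)
  (x : gpoint (line_graph src tgt L)) : gpoint (base_graph src tgt L) :=
  match x with
  | inl e => inr (e, L e / 2)
  | inr (le, t) =>
      let ei := (ledge_pair le).1 in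
      let ej := (ledge_pair le).2 in
      let v := common src tgt ei ej in
      if t == L ei / 2 then inl v
      else if t < L ei / 2 then toward src tgt L ei v t
      else toward src tgt L ej v ((L ei + L ej) / 2 - t)
  end.

Definition lmax (R : realType) (E : Type) (L : E -> R) : \bar R :=
  ereal_sup (range (fun e => (L e)%:E)).

(** Every path in G from h(x) to h(y) can be followed in L(G): while the path runs inside an edge f
    we stay at V_f, and whenever it passes from an edge e to an edge f through a vertex v we move
    from V_e to V_f along the edge of L(G) of length (L(e) + L(f))/2, which is paid for by the two
    half-edges travelled around v.  Measuring positions by their distance to the midpoints of the
    current edges, a path of length l from h(x) to h(y) lifts to a path from V_e to V_f of length
    at most ρ + l + ρ', where ρ, ρ' are the distances of h(x), h(y) to Pm(e), Pm(f).  Finally x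
    lies within L(e) - ρ of such a V_e (and y likewise), which gives the two extra l_max. *)

From HB Require Import structures.
From mathcomp Require Import all_boot all_order all_algebra.
From mathcomp Require Import all_classical all_reals all_analysis.
From mathcomp Require Import ring lra.

Import Order.TTheory GRing.Theory Num.Theory.
Local Open Scope classical_set_scope.
Local Open Scope ring_scope.
Set Implicit Arguments.
Unset Strict Implicit.
Unset Printing Implicit Defensive.

Section Chains.
Variables (R : realType) (g : mgraph R).

Definition within (x y : gpoint g) (B : R) := exists l, chain x y l /\ l <= B.

Lemma chain_cat (x z y : gpoint g) a b :
  chain x z a -> chain z y b -> chain x y (a + b).
Proof.
elim=> [x0|x0 z0 y0 a0 b0 st _ IH] H; first by rewrite add0r.
by rewrite -addrA; apply: chain_cons st (IH H).
Qed.

Lemma chain_step (x y : gpoint g) a : step x y a -> chain x y a.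
Proof. by move=> st; rewrite -[a]addr0; apply: chain_cons st (chain_nil _). Qed.

Lemma step_sym (x y : gpoint g) a : step x y a -> step y x a.
Proof. by case=> e [s [s' [H1 [H2 ->]]]]; exists e, s', s; rewrite distrC. Qed.

Lemma chain_rev (x y : gpoint g) l : chain x y l -> chain y x l.
Proof.
elim=> [x0|x0 z0 y0 a0 b0 st _ IH]; first exact: chain_nil.
by rewrite addrC; apply: chain_cat IH (chain_step (step_sym st)).
Qed.

Lemma chain_ge0 (x y : gpoint g) l : chain x y l -> 0 <= l.
Proof. by elim=> // x0 z0 y0 a0 b0 [e [s [s' [_ [_ ->]]]]] _; apply: addr_ge0. Qed.

Lemma gdist_ge0 (x y : gpoint g) : (0 <= gdist x y)%E.
Proof.
by apply: le_ereal_inf_tmp => _ [l Hl <-]; rewrite lee_fin; apply: chain_ge0 Hl.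
Qed.

Lemma gdist_le_chain (x y : gpoint g) l : chain x y l -> (gdist x y <= l%:E)%E.
Proof. by move=> Hl; apply: ereal_inf_lbound; exists l. Qed.

Lemma within_le (x y : gpoint g) B B' : within x y B -> B <= B' -> within x y B'.
Proof. by move=> [l [Hl lB]] BB'; exists l; split=> //; apply: le_trans BB'. Qed.

Lemma within_trans (x z y : gpoint g) B B' :
  within x z B -> within z y B' -> within x y (B + B').
Proof.
by move=> [l [Hl lB]] [l' [Hl' lB']]; exists (l + l'); split; [apply: chain_cat Hl Hl'|apply: lerD].
Qed.

Lemma within_refl (x : gpoint g) B : 0 <= B -> within x x B.
Proof. by move=> B0; exists 0; split=> //; apply: chain_nil. Qed.

Lemma chain_interior_src (e : edg g) t :
  0 < t < len e -> chain (inr (e, t)) (inl (src e)) t.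
Proof.
move=> /andP[t0 te]; apply: chain_step; exists e, t, 0; split; last split.
- by split; [rewrite !ltW | right; right; rewrite t0 te].
- by split; [rewrite lexx (ltW (le_lt_trans (ltW t0) te)) | left].
- by rewrite subr0 gtr0_norm.
Qed.

Lemma chain_interior_tgt (e : edg g) t :
  0 < t < len e -> chain (inr (e, t)) (inl (tgt e)) (len e - t).
Proof.
move=> /andP[t0 te]; apply: chain_step; exists e, t, (len e); split; last split.
- by split; [rewrite !ltW | right; right; rewrite t0 te].
- by split; [rewrite lexx (ltW (le_lt_trans (ltW t0) te)) | right; left].
- by rewrite distrC gtr0_norm ?subr_gt0.
Qed.

Hypothesis len_gt0 : forall e, 0 < @len R g e.

Lemma vertex_mid_dist (v : vtx g) e s :
  on_edge (inl v) e s -> `|s - len e / 2| = len e / 2.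
Proof.
have le0 := len_gt0 e.
have half0 : 0 <= len e / 2 by rewrite divr_ge0 ?ltW.
move=> [_ [[-> _]|[[-> _]|[_ //]]]]; first by rewrite sub0r normrN ger0_norm.
by rewrite (_ : len e - len e / 2 = len e / 2) ?ger0_norm //; field.
Qed.

Lemma vertex_coord_dist (u v : vtx g) e s c :
  on_edge (inl u) e s -> on_edge (inl v) e c -> u <> v -> `|s - c| = len e.
Proof.
have le0 := ltW (len_gt0 e).
move=> [_ [[-> [Hu]]|[[-> [Hu]]|[_ //]]]] [_ [[-> [Hv]]|[[-> [Hv]]|[_ //]]]] uv;
  try by case: uv; rewrite Hu Hv.
  by rewrite sub0r normrN ger0_norm.
by rewrite subr0 ger0_norm.
Qed.

Hypothesis no_loop : forall e, @src R g e <> tgt e.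

Lemma on_edge_coord_uniq (p : gpoint g) e s s' :
  on_edge p e s -> on_edge p e s' -> s = s'.
Proof.
move=> [_ [[-> ->]|[[-> ->]|[_ ->]]]] [_ [[-> H]|[[-> H]|[_ H]]]] //;
  by case: H => // H; case: (no_loop (esym H)) || case: (no_loop H).
Qed.

Lemma on_two_edges_vertex (p : gpoint g) e s f s' :
  on_edge p e s -> on_edge p f s' -> e <> f -> exists v, p = inl v.
Proof.
case: p => [v|[e0 t]] He Hf ef; first by exists v.
case: ef; case: He => _ [[_ //]|[[_ //]|[_ [<- _]]]].
by case: Hf => _ [[_ //]|[[_ //]|[_ [<- _]]]].
Qed.

End Chains.

Lemma set2_eq_pair (T : Type) (a b e f : T) :
  [set e; f] = [set a; b] -> a <> b -> (a = e /\ b = f) \/ (a = f /\ b = e).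
Proof.
move=> H ab.
have Ha : [set e; f] a by rewrite H; left.
have Hb : [set e; f] b by rewrite H; right.
by move: ab; case: Ha => ->; case: Hb => -> ab; [case: ab | left | right | case: ab].
Qed.

Section LineGraph.
Variables (R : realType) (V E : Type) (src tgt : E -> V) (L : E -> R).
Hypothesis len_gt0 : forall e, 0 < L e.

Local Notation G := (base_graph src tgt L).
Local Notation LG := (line_graph src tgt L).
Local Notation line_within e f := (@within R LG (inl e) (inl f)).

Lemma line_within_adjacent (v : V) e f c c' :
  @on_edge R G (inl v) e c -> @on_edge R G (inl v) f c' ->
  line_within e f ((L e + L f) / 2).
Proof.
have he := len_gt0 e; have hf := len_gt0 f.
have B0 : 0 <= (L e + L f) / 2 by rewrite divr_ge0 // addr_ge0 // ltW.
move=> He Hf; case: (pselect (e = f)) => [ef|ef]; first by rewrite ef in B0 *; apply: within_refl.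
have sh : share src tgt e f.
  move: He Hf => [_ [[_ [He]]|[[_ [He]]|[_ //]]]] [_ [[_ [Hf]]|[[_ [Hf]]|[_ //]]]];
   rewrite /share -He -Hf; tauto.
pose le : ledge src tgt := exist _ [set e; f] (ex_intro _ (e, f) (conj ef (conj sh erefl))).
have [ne' [_ Hs]] := proj2_sig (cid (proj2_sig le)).
exists ((L e + L f) / 2); split=> //; apply: chain_step; exists le.
case: (set2_eq_pair Hs ne') => [[H1 H2]|[H1 H2]].
- exists 0, ((L e + L f) / 2); split; last split.
  + split; first by rewrite /= /ledge_pair H1 H2 lexx B0.
    by left; rewrite /= /ledge_pair H1.
  + split; first by rewrite /= /ledge_pair H1 H2 lexx B0.
    by right; left; rewrite /= /ledge_pair H1 H2.
  + by rewrite sub0r normrN ger0_norm.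
- exists ((L e + L f) / 2), 0; split; last split.
  + split; first by rewrite /= /ledge_pair H1 H2 [L f + _]addrC lexx B0.
    by right; left; rewrite /= /ledge_pair H1 H2 addrC.
  + split; first by rewrite /= /ledge_pair H1 H2 [L f + _]addrC lexx B0.
    by left; rewrite /= /ledge_pair H1.
  + by rewrite subr0 ger0_norm.
Qed.

Hypothesis no_loop : forall e, src e <> tgt e.

Let coord_uniq := @on_edge_coord_uniq R G no_loop.
Let vertex_mid (v : V) e s : @on_edge R G (inl v) e s -> `|s - L e / 2| = L e / 2 :=
  @vertex_mid_dist R G len_gt0 v e s.
Let vertex_coord (u v : V) e s c :
    @on_edge R G (inl u) e s -> @on_edge R G (inl v) e c -> u <> v -> `|s - c| = L e :=
  @vertex_coord_dist R G len_gt0 u v e s c.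

(* The second clause is the induction invariant needed when a path leaves an edge through one of
   its endpoints v: it bounds the cost of reaching V_f from any edge e at v. *)
Definition line_reach (p : gpoint G) (f : E) (B : R) : Prop :=
  (forall h s, @on_edge R G p h s -> line_within h f (`|s - L h / 2| + B)) /\
  (forall h s (v : V) c e c', @on_edge R G p h s -> @on_edge R G (inl v) h c ->
     @on_edge R G (inl v) e c' -> line_within e f (L e / 2 + `|s - c| + B)).

Lemma line_reach_end (q : gpoint G) f s' :
  on_edge q f s' -> line_reach q f `|s' - L f / 2|.
Proof.
move=> Hq; have hf := len_gt0 f; split.
  move=> h s Hp; case: (pselect (h = f)) => [hf_eq|ne].
    by subst h; rewrite (coord_uniq Hp Hq); apply: within_refl; rewrite addr_ge0.
  have [u Hu] := on_two_edges_vertex Hp Hq ne; subst q.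
  rewrite (vertex_mid Hp) (vertex_mid Hq); apply: within_le (line_within_adjacent Hp Hq) _.
  by rewrite mulrDl.
move=> h s v c e c' Hp Hv He; have he := len_gt0 e.
case: (pselect (h = f)) => [hf_eq|ne].
  subst h; rewrite (coord_uniq Hp Hq) in Hv *.
  apply: within_le (line_within_adjacent He Hv) _.
  have := vertex_mid Hv; have := ler_distD s' c (L f / 2); rewrite (distrC c s'); lra.
have [u Hu] := on_two_edges_vertex Hp Hq ne; subst q.
case: (pselect (u = v)) => [uv|uv].
  subst u; rewrite (coord_uniq Hp Hv) subrr normr0 (vertex_mid Hq).
  by apply: within_le (line_within_adjacent He Hq) _; rewrite mulrDl addr0.
rewrite (vertex_coord Hp Hv uv) (vertex_mid Hq).
apply: within_le (within_trans (line_within_adjacent He Hv) (line_within_adjacent Hp Hq)) _.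
have := len_gt0 h; lra.
Qed.

Lemma line_reach_step (x z : gpoint G) a f B :
  step x z a -> line_reach z f B -> line_reach x f (a + B).
Proof.
case=> k [c1 [c2 [Hx [Hz ->]]]] [IH1 IH2].
have reach1 : forall h s, on_edge x h s ->
    line_within h f (`|s - L h / 2| + (`|c1 - c2| + B)).
  move=> h s Hp; case: (pselect (h = k)) => [hk|ne].
    subst h; rewrite (coord_uniq Hp Hx); apply: within_le (IH1 k c2 Hz) _.
    have := ler_distD c1 c2 (L k / 2); rewrite (distrC c2 c1); lra.
  have [u Hu] := on_two_edges_vertex Hp Hx ne; subst x.
  apply: within_le (IH2 k c2 u c1 h s Hz Hx Hp) _.
  by rewrite (vertex_mid Hp) (distrC c2 c1) addrA.
split=> // h s v c e c' Hp Hv He.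
case: (pselect (h = k)) => [hk|ne].
  subst h; rewrite (coord_uniq Hp Hx); apply: within_le (IH2 k c2 v c e c' Hz Hv He) _.
  have := ler_distD c1 c2 c; rewrite (distrC c2 c1); lra.
have [u Hu] := on_two_edges_vertex Hp Hx ne; subst x.
case: (pselect (u = v)) => [uv|uv].
  subst u; rewrite (coord_uniq Hp Hv); apply: within_le (IH2 k c2 v c1 e c' Hz Hx He) _.
  by rewrite subrr normr0 addr0 (distrC c2 c1) addrA.
rewrite (vertex_coord Hp Hv uv).
apply: within_le (within_trans (line_within_adjacent He Hv) (reach1 h s Hp)) _.
rewrite (vertex_mid Hp); have := len_gt0 h; lra.
Qed.

Lemma line_reach_chain (p q : gpoint G) l f s' :
  chain p q l -> on_edge q f s' -> line_reach p f (l + `|s' - L f / 2|).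
Proof.
elim=> [x|x z y a b st _ IH] Hq; first by rewrite add0r; apply: line_reach_end.
by rewrite -addrA; apply: line_reach_step st (IH Hq).
Qed.

Lemma toward_on_edge e (v : V) d : 0 <= d < L e / 2 ->
  exists2 s, @on_edge R G (toward src tgt L e v d) e s & `|s - L e / 2| = d.
Proof.
move=> /andP[d0 dle]; have he := len_gt0 e.
rewrite /toward; case: pselect => vs; [exists (L e / 2 - d) | exists (L e / 2 + d)].
- by split; [rewrite /=; apply/andP; split; lra | right; right; split=> //=; apply/andP; split; lra].
- by rewrite addrAC subrr sub0r normrN ger0_norm.
- by split; [rewrite /=; apply/andP; split; lra | right; right; split=> //=; apply/andP; split; lra].
- by rewrite addrAC subrr add0r ger0_norm.
Qed.

Lemma common_on_edge e f : exists c, @on_edge R G (inl (common src tgt e f)) e c.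
Proof.
have he := ltW (len_gt0 e).
rewrite /common; case: pselect => sh; [exists 0 | exists (L e)].
- by split; [rewrite lexx he | left].
- by split; [rewrite lexx he | right; left].
Qed.

Lemma hmap_near_line_vertex (x : gpoint LG) : valid_point x ->
  exists e a s, chain x (inl e) a /\ @on_edge R G (hmap x) e s /\ a + `|s - L e / 2| <= L e.
Proof.
case: x => [e|[le t]] /= Hx.
  have he := len_gt0 e; exists e, 0, (L e / 2); split; first exact: chain_nil.
  split; last by rewrite subrr normr0 add0r ltW.
  by split; [rewrite /=; apply/andP; split; lra | right; right; split=> //=; apply/andP; split; lra].
move: Hx; set ei := (ledge_pair le).1; set ej := (ledge_pair le).2.
set v := common src tgt ei ej => Hx; case/andP: (Hx) => t0 tl.
have hi := len_gt0 ei; have hj := len_gt0 ej.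
case: ltgtP => Ht.
- have [|s Hs Hsd] := @toward_on_edge ei v t; first by rewrite (ltW t0) Ht.
  exists ei, t, s; split; first exact: (chain_interior_src (g := LG)).
  by split=> //; rewrite Hsd; lra.
- have [|s Hs Hsd] := @toward_on_edge ej v ((L ei + L ej) / 2 - t); first by apply/andP; split; lra.
  exists ej, ((L ei + L ej) / 2 - t), s; split; first exact: (chain_interior_tgt (g := LG)).
  by split=> //; rewrite Hsd; lra.
- have [c Hc] := common_on_edge ei ej.
  exists ei, t, c; split; first exact: (chain_interior_src (g := LG)).
  by split=> //; rewrite (vertex_mid Hc); lra.
Qed.

Lemma gdist_hmap_le (x y : gpoint LG) : valid_point x -> valid_point y ->
  exists ex ey, forall c, chain (hmap x) (hmap y) c -> (gdist x y <= (c + L ex + L ey)%:E)%E.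
Proof.
move=> Hx Hy.
have [ex [ax [sx [Cx [Ox Bx]]]]] := hmap_near_line_vertex Hx.
have [ey [ay [sy [Cy [Oy By]]]]] := hmap_near_line_vertex Hy.
exists ex, ey => c Hc.
have [l [Cl Hl]] := (line_reach_chain Hc Oy).1 ex sx Ox.
apply: le_trans (gdist_le_chain (chain_cat Cx (chain_cat Cl (chain_rev Cy)))) _.
rewrite lee_fin; lra.
Qed.

End LineGraph.

Lemma le_ereal_inf_addr (R : realType) (S : set R) (a : \bar R) (b : R) :
  (forall l, S l -> (a <= (l + b)%:E)%E) -> (a <= ereal_inf (EFin @` S) + b%:E)%E.
Proof.
move=> Sb; rewrite -leeBlDr //; apply: le_ereal_inf_tmp => _ [l Sl <-].
by rewrite leeBlDr // -EFinD; apply: Sb.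
Qed.

Unset Implicit Arguments.
Set Strict Implicit.

Theorem mainTheorem2 (R : realType) (V E : Type) (src tgt : E -> V) (L : E -> R)
  (hsimple : simple_graph src tgt)
  (hconn : connected_graph src tgt)
  (hlocfin : locally_finite src tgt)
  (hlen : forall e, 0 < L e)
  (x y : gpoint (line_graph src tgt L)) :
  valid_point x -> valid_point y ->
  (gdist x y <= gdist (hmap x) (hmap y) + 2%:E * lmax L)%E.
Proof.
move=> Hx Hy.
have [ex [ey bound]] := gdist_hmap_le hlen (proj1 hsimple) Hx Hy.
have le_lmax e : ((L e)%:E <= lmax L)%E by apply: ereal_sup_ubound; exists e.
case Hm: (lmax L) => [M| |].
- have LM e : L e <= M by have := le_lmax e; rewrite Hm lee_fin.
  rewrite -EFinM; apply: le_ereal_inf_addr => c Hc.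
  apply: le_trans (bound c Hc) _; rewrite lee_fin.
  have := LM ex; have := LM ey; lra.
- rewrite gt0_muley ?lte_fin // addey ?leey //.
  by apply/negP => /eqP H; have := gdist_ge0 (hmap x) (hmap y); rewrite H.
- by have := le_lmax ex; rewrite Hm leeNy_eq.
Qed.
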